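(* Let $L$ be an even positive integer and $N\ge 1$ an integer. Consider the logarithmic Bethe equations $$\frac{1}{\pi}\arctan \lambda_k=\frac{I_k}{L}-\frac{1}{\pi L}\sum_{l=1}^N \arctan(\lambda_k-\lambda_l),\qquad k=1,\dots,N,$$ for unknowns $\lambda_1,\dots,\lambda_N$, where the Bethe numbers $I_k$ are integers if $N$ is odd and half-integers if $N$ is even. Then the solutions $(\lambda_1,\dots,\lambda_N)$ of these equations with $\lambda_k\neq\lambda_l$ for $k\neq l$ are all real, and they are characterized (in one-to-one correspondence) by the choice of $N$ distinct (half-)integers $I_1,\dots,I_N$ satisfying $$-\frac{L+N-1}{2}< I_k < \frac{L+N-1}{2}.$$
   Context: These are the logarithmic form of the Bethe equations $\left(\frac{\lambda_k-i}{\lambda_k+i}\right)^L=\prod_{l\neq k}\frac{\lambda_k-\lambda_l+i}{\lambda_k-\lambda_l-i}$ of the non-compact spin $s=-1$ Heisenberg chain; $\arctan$ denotes the principal branch. *)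

From HB Require Import structures.
From mathcomp Require Import all_boot all_order all_algebra.
From mathcomp Require Import all_classical all_reals all_analysis.
From mathcomp.real_closed Require Import complex.
Set Implicit Arguments. Unset Strict Implicit. Unset Printing Implicit Defensive.
Import Order.TTheory GRing.Theory Num.Theory.
Local Open Scope ring_scope.

(* Bethe equations of the non-compact spin s = -1 chain, multiplicative form
   with denominators cleared:
   (l_k - i)^L prod_{l<>k} (l_k - l_l - i) = (l_k + i)^L prod_{l<>k} (l_k - l_l + i). *)
Definition bethe_eqs (R : realType) (L N : nat) (lam : 'I_N -> R[i]) : Prop :=
  forall k : 'I_N,
    (lam k - 'i) ^+ L * \prod_(l < N | l != k) (lam k - lam l - 'i)
    = (lam k + 'i) ^+ L * \prod_(l < N | l != k) (lam k - lam l + 'i).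

Definition log_bethe_eqs (R : realType) (L N : nat) (lam : 'I_N -> R)
    (I : 'I_N -> R) : Prop :=
  forall k : 'I_N,
    pi^-1 * atan (lam k)
    = I k / L%:R - (pi * L%:R)^-1 * \sum_(l < N) atan (lam k - lam l).

Definition bethe_number (R : realType) (N : nat) (x : R) : Prop :=
  if odd N then exists z : int, x = z%:~R
  else exists z : int, x = z%:~R + 2^-1.

From HB Require Import structures.
From mathcomp Require Import all_boot all_order all_algebra.
From mathcomp Require Import all_classical all_reals all_analysis.
From mathcomp.real_closed Require Import complex.
From mathcomp Require Import ring lra zify.
Import Order.TTheory GRing.Theory Num.Theory.
Import numFieldNormedType.Exports.
Local Open Scope ring_scope.

(* Reality: at a root of maximal imaginary part, a positive imaginary part
   would make every factor on the left of the Bethe equations at most as large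
   in modulus as the matching factor on the right, and the first factor
   strictly smaller; applying this to the conjugate solution bounds the
   imaginary parts from below as well.
   Real solutions: the counting function
   Z_x(t) = (L atan t + sum_l atan (t - x_l)) / pi turns the logarithmic
   equations into Z_x(x_k) = I_k.  Z_x is strictly increasing in t and
   nonincreasing in the roots x, so the order of the roots is that of the
   Bethe numbers, |Z_x(x_k)| < (L + N - 1) / 2, a maximum principle gives
   uniqueness, and a solution is the supremum of all subsolutions lying
   between an explicit sub- and supersolution: roots spread far apart in the
   order prescribed by the Bethe numbers. *)

Lemma normr_subi_le_addi {R : rcfType} (z : R[i]) : (`|z - 'i| <= `|z + 'i|) = (0 <= complex.Im z).
Proof.
rewrite -(ler_pXn2r (_ : 0 < 2)%N) ?nnegrE // -!add_Re2_Im2 lecR.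
case: z => a b /=; rewrite subr0 addr0 lerD2l -subr_ge0.
have -> : (b + 1) ^+ 2 - (b - 1) ^+ 2 = 4%:R * b by ring.
by rewrite pmulr_rge0 ?ltr0n.
Qed.

Lemma normr_subi_lt_addi {R : rcfType} (z : R[i]) : (`|z - 'i| < `|z + 'i|) = (0 < complex.Im z).
Proof.
rewrite -(ltr_pXn2r (_ : 0 < 2)%N) ?nnegrE // -!add_Re2_Im2 ltcR.
case: z => a b /=; rewrite subr0 addr0 ltrD2l -subr_gt0.
have -> : (b + 1) ^+ 2 - (b - 1) ^+ 2 = 4%:R * b by ring.
by rewrite pmulr_rgt0 ?ltr0n.
Qed.

Lemma normr_addi_gt0 {R : rcfType} (z : R[i]) : 0 <= complex.Im z -> 0 < `|z + 'i|.
Proof.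
case: z => a b /= b_ge0; rewrite normr_gt0 eq_complex /= negb_and orbC.
by rewrite gt_eqF // ltr_wpDl.
Qed.

Lemma bethe_eqs_Im_le0 {R : realType} {L N : nat} {lam : 'I_N -> R[i]} :
  (0 < L)%N -> bethe_eqs L lam -> forall k, complex.Im (lam k) <= 0.
Proof.
move=> L_gt0 eqs k.
have [m _ Im_max] := arg_maxP (fun i => complex.Im (lam i)) (isT : xpredT k).
apply: le_trans (Im_max k isT) _; rewrite leNgt; apply/negP => Im_m_gt0.
have Im_diff_ge0 l : 0 <= complex.Im (lam m - lam l).
  by move: (Im_max l isT); case: (lam m) (lam l) => a b [c d] /=; rewrite subr_ge0.
have := congr1 Num.norm (eqs m); rewrite !normrM !normrX !normr_prod.
apply/eqP; rewrite lt_eqF //.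
apply: le_lt_trans (_ : `|lam m - 'i| ^+ L * \prod_(l < N | l != m) `|lam m - lam l + 'i| < _).
  rewrite ler_wpM2l ?exprn_ge0 //; apply: ler_prod => l _.
  by rewrite normr_ge0 normr_subi_le_addi Im_diff_ge0.
rewrite ltr_pM2r ?ltrXn2r ?normr_subi_lt_addi -?lt0n //.
by apply: prodr_gt0 => l _; exact: normr_addi_gt0.
Qed.

Lemma bethe_eqs_conj {R : realType} {L N : nat} {lam : 'I_N -> R[i]} :
  bethe_eqs L lam -> bethe_eqs L (fun k => (lam k)^*).
Proof.
move=> eqs k; have := congr1 Num.conj (eqs k).
rewrite !rmorphM !rmorphXn !rmorph_prod /= rmorphB rmorphD /= conjCi opprK.
under eq_bigr => l _ do rewrite !rmorphB /= conjCi opprK.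
under [in RHS]eq_bigr => l _ do rewrite rmorphD rmorphB /= conjCi.
by move=> ->.
Qed.

Lemma bethe_eqs_real {R : realType} {L N : nat} {lam : 'I_N -> R[i]} :
  (0 < L)%N -> bethe_eqs L lam -> forall k, complex.Im (lam k) = 0.
Proof.
move=> L_gt0 eqs k; apply/eqP; rewrite eq_le (bethe_eqs_Im_le0 L_gt0 eqs) /=.
have := bethe_eqs_Im_le0 L_gt0 (bethe_eqs_conj eqs) k.
by case: (lam k) => a b /=; rewrite oppr_le0.
Qed.

Lemma continuous_sumr {R : realType} {T : topologicalType} {I : Type} (r : seq I)
    (P : pred I) (f : I -> T -> R) :
  (forall i, continuous (f i)) -> continuous (fun t => \sum_(i <- r | P i) f i t).
Proof.
move=> f_cont; rewrite -fct_sumE.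
apply: (big_ind (fun g => continuous g)) => [t|g h g_cont h_cont t|i _].
- exact: cvg_cst.
- exact: continuousD (g_cont t) (h_cont t).
- exact: f_cont.
Qed.

Section MonotoneSystem.
Context {R : realType} {T : eqType} (G : (T -> R) -> T -> R -> R) (c a b : T -> R).
Hypothesis G_incr : forall x k, {homo G x k : s t / s < t}.
Hypothesis G_antitone : forall x y k t, (forall l, x l <= y l) -> G y k t <= G x k t.
Hypothesis G_cont : forall x k, continuous (G x k).
Hypothesis a_le_b : forall l, a l <= b l.
Hypothesis a_sub : forall k, G a k (a k) <= c k.
Hypothesis b_super : forall k, c k <= G b k (b k).

Let G_mono x k : {mono G x k : s t / s <= t} := le_mono (G_incr x k).

Let G_ivt x k s t v : s <= t -> G x k s <= v <= G x k t ->
  exists2 u, s <= u <= t & G x k u = v.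
Proof.
move=> le_st /andP[le_sv le_vt].
have [|u] := IVT (v := v) le_st (continuous_subspaceT (G_cont x k)).
  by rewrite ge_min le_sv le_max le_vt orbT.
by rewrite in_itv /=; exists u.
Qed.

Let subsolution x := (forall l, a l <= x l <= b l) /\ (forall l, G x l (x l) <= c l).

Let xs k := sup [set x k | x in subsolution].

Let subsolution_a : subsolution a.
Proof. by split=> l; rewrite ?lexx ?a_le_b ?a_sub. Qed.

Let has_sup_xs k : has_sup [set x k | x in subsolution].
Proof.
split; first by exists (a k), a.
by exists (b k) => _ [x [x_bnd _] <-]; case/andP: (x_bnd k).
Qed.

Let subsolution_le_xs x k : subsolution x -> x k <= xs k.
Proof. by move=> x_sub; apply: sup_upper_bound (has_sup_xs k) _ _; exists x. Qed.

Let xs_le_b k : xs k <= b k.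
Proof.
apply: ge_sup; first by exists (a k), a.
by move=> _ [x [x_bnd _] <-]; case/andP: (x_bnd k).
Qed.

Let xs_sub k : G xs k (xs k) <= c k.
Proof.
rewrite leNgt; apply/negP => c_lt.
have [t /andP[_ le_t_xs] Gt] : exists2 t, a k <= t <= xs k & G xs k t = c k.
  apply: G_ivt; first exact: subsolution_le_xs.
  by rewrite (ltW c_lt) (le_trans _ (a_sub k)) // G_antitone // => l; exact: subsolution_le_xs.
have xs_le_t : xs k <= t.
  apply: ge_sup; first by exists (a k), a.
  move=> _ [x x_sub <-]; rewrite -(G_mono xs k) Gt.
  by apply: le_trans (x_sub.2 k); apply: G_antitone => l; exact: subsolution_le_xs.
by move: c_lt; rewrite -Gt ltNge (G_mono xs k) xs_le_t.
Qed.

Let xs_super k : c k <= G xs k (xs k).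
Proof.
rewrite leNgt; apply/negP => lt_c.
have [t /andP[le_xs_t le_t_b] Gt] : exists2 t, xs k <= t <= b k & G xs k t = c k.
  apply: G_ivt; first exact: xs_le_b.
  by rewrite (ltW lt_c) (le_trans (b_super k)) // G_antitone // => l; exact: xs_le_b.
pose x' l := if l == k then t else xs l.
have le_xs_x' l : xs l <= x' l by rewrite /x'; case: eqP => [->|].
have x'_sub : subsolution x'.
  split=> l; rewrite /x'; case: eqP => [->|_].
  - by rewrite le_t_b (le_trans (subsolution_le_xs _ k subsolution_a) le_xs_t).
  - by rewrite subsolution_le_xs ?xs_le_b.
  - by rewrite -Gt G_antitone.
  - by apply: le_trans (xs_sub l); apply: G_antitone.
have := subsolution_le_xs _ k x'_sub; rewrite /x' eqxx => le_t_xs.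
by move: lt_c; rewrite -Gt (@le_anti _ _ t (xs k)) ?le_t_xs ?le_xs_t // ltxx.
Qed.

Lemma monotone_system_solvable : exists x, forall k, G x k (x k) = c k.
Proof. by exists xs => k; apply: le_anti; rewrite xs_sub xs_super. Qed.

End MonotoneSystem.

Lemma inj_card_le_range (T : finType) (v : T -> nat) (P : pred T) (m n : nat) :
  injective v -> (forall x, P x -> m <= v x < n)%N -> (#|P| <= n - m)%N.
Proof.
move=> v_inj v_range; rewrite cardE -(size_map v) -(size_iota m (n - m)).
apply: uniq_leq_size; first by rewrite map_inj_uniq // enum_uniq.
move=> y /mapP[x]; rewrite mem_enum => /v_range /andP[le_mv lt_vn] ->.
by rewrite mem_iota le_mv subnKC // (leq_trans le_mv (ltnW lt_vn)).
Qed.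

Lemma atan_le_opp {R : realType} (th y : R) :
  th \in `](- (pi / 2)), (pi / 2)[ -> y <= - `|tan th| -> atan y <= - th.
Proof.
move=> th_in le_y; rewrite -(tanK th_in) -atanN le_atan //.
by apply: le_trans le_y _; rewrite lerN2 ler_norm.
Qed.

Lemma bethe_number_shift {R : realType} {L N : nat} (x : R) :
  ~~ odd L -> (0 < N)%N -> bethe_number N x ->
  - ((L + N - 1)%:R / 2) < x < (L + N - 1)%:R / 2 ->
  exists2 n : nat, x = n%:R - (L + N - 1)%:R / 2 & (0 < n < L + N - 1)%N.
Proof.
move=> L_even N_gt0 x_bethe /andP[lo hi]; set h := (L + N - 1)%:R / 2 in lo hi *.
suff [z xz] : exists z : int, x + h = z%:~R.
  have [n z_n] : exists n : nat, z = n.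
    case: z xz => [n|n] xz; first by exists n.
    by move: lo; rewrite -subr_gt0 opprK xz NegzE rmorphN /= oppr_gt0 ltNge ler0n.
  have n_xh : n%:R = x + h by rewrite xz z_n.
  exists n; first by rewrite n_xh addrK.
  move: lo hi; rewrite -!(ltr_nat R) n_xh /h natrB ?addn_gt0 ?N_gt0 ?orbT // natrD.
  move=> lo hi; apply/andP; split; lra.
have eL := odd_double_half L; rewrite (negbTE L_even) add0n in eL.
have h_def : h = (L./2 + N./2)%:R + ((odd N)%:R - 1) / 2.
  rewrite /h natrB ?addn_gt0 ?N_gt0 ?orbT // -{1}eL -{1}(odd_double_half N).
  by rewrite !natrD -!muln2 !natrM; field.
rewrite h_def; move: x_bethe; rewrite /bethe_number.
by case: (odd N) => -[z ->]; exists (z + (L./2 + N./2)%:Z)%R; rewrite intrD /=; field.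
Qed.

Section CountingFunction.
Context {R : realType} (L : nat) {N : nat}.
Hypothesis L_gt0 : (0 < L)%N.
Implicit Types (x y lam I : 'I_N -> R) (s t : R).

Definition counting_fun x t : R := (L%:R * atan t + \sum_(l < N) atan (t - x l)) / pi.

Lemma log_bethe_eqsE x I :
  log_bethe_eqs L x I <-> forall k, counting_fun x (x k) = I k.
Proof.
have L_neq0 : (L%:R : R) != 0 by rewrite pnatr_eq0 -lt0n.
rewrite /log_bethe_eqs /counting_fun.
(* abstracted, as [field] would otherwise unfold the definition of [pi] *)
move: (pi : R) (lt0r_neq0 (pi_gt0 R)) => p p_neq0; split=> eqs k; last first.
  by rewrite -(eqs k); field; rewrite L_neq0.
rewrite -[I k](divfK L_neq0) mulrC.
have -> : I k / L%:R = p^-1 * atan (x k) + (p * L%:R)^-1 * \sum_(l < N) atan (x k - x l).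
  by rewrite (eqs k) subrK.
by field; rewrite L_neq0.
Qed.

Lemma counting_fun_lt x : {homo counting_fun x : s t / s < t}.
Proof.
move=> s t lt_st; rewrite ltr_pM2r ?invr_gt0 ?pi_gt0 // ltr_leD //.
  by rewrite ltr_pM2l ?ltr0n // lt_atan.
by apply: ler_sum => l _; rewrite le_atan // lerD2r ltW.
Qed.

Lemma counting_fun_antitone x y t :
  (forall l, x l <= y l) -> counting_fun y t <= counting_fun x t.
Proof.
move=> le_xy; rewrite ler_pM2r ?invr_gt0 ?pi_gt0 // lerD2l.
by apply: ler_sum => l _; rewrite le_atan // lerD2l lerN2.
Qed.

Lemma continuous_counting_fun x : continuous (counting_fun x).
Proof.
move=> t; apply: cvgM; last exact: cvg_cst.
apply: cvgD; first by apply: cvgM; [exact: cvg_cst | exact: continuous_atan].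
apply: (continuous_sumr _ _ (fun l t => atan (t - x l))) => l u.
apply: continuous_comp; last exact: continuous_atan.
by apply: cvgB; [exact: cvg_id | exact: cvg_cst].
Qed.

Lemma counting_funN x t : counting_fun (fun l => - x l) (- t) = - counting_fun x t.
Proof.
rewrite /counting_fun atanN; under eq_bigr => l _ do rewrite -opprD atanN.
by rewrite sumrN mulrN -opprD mulNr.
Qed.

Lemma counting_fun_bound x k : `|counting_fun x (x k)| < (L + N - 1)%:R / 2.
Proof.
have pi_gt0 := pi_gt0 R.
have atan_bound t : `|atan t| < pi / 2 by rewrite ltr_norml atan_gtNpi2 atan_ltpi2.
have atan_term_bound : `|L%:R * atan (x k)| < L%:R * (pi / 2).
  by rewrite normrM normr_nat ltr_pM2l ?ltr0n.
have sum_bound : `|\sum_(l < N | l != k) atan (x k - x l)| <= N.-1%:R * (pi / 2).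
  apply: le_trans (ler_norm_sum _ _ _) _.
  apply: le_trans (ler_sum _ (fun l _ => ltW (atan_bound (x k - x l)))) _.
  by rewrite sumr_const cardC1 card_ord mulr_natl.
have N_gt0 : (0 < N)%N := leq_ltn_trans (leq0n k) (ltn_ord k).
have -> : (L + N - 1 = L + N.-1)%N by rewrite -subn1 addnBA.
rewrite /counting_fun (bigD1 k) //= subrr atan0 add0r normrM [`|pi^-1|]gtr0_norm ?invr_gt0 //.
rewrite ltr_pdivrMr // natrD.
apply: le_lt_trans (ler_normD _ _) _; lra.
Qed.

Lemma counting_fun_comparison x y :
  (forall k, counting_fun x (x k) <= counting_fun y (y k)) ->
  forall k, x k <= y k.
Proof.
move=> le_xy k.
have [m _ max_m] := arg_maxP (fun i => x i - y i) (isT : xpredT k).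
rewrite -subr_le0; apply: le_trans (max_m k isT) _; rewrite leNgt; apply/negP => gap_gt0.
have := le_xy m; apply/negP; rewrite -ltNge ltr_pM2r ?invr_gt0 ?pi_gt0 // ltr_leD //.
  by rewrite ltr_pM2l ?ltr0n // lt_atan // -subr_gt0.
by apply: ler_sum => l _; rewrite le_atan //; have := max_m l isT; rewrite /=; lra.
Qed.

Lemma counting_fun_solution_unique x y :
  (forall k, counting_fun x (x k) = counting_fun y (y k)) -> x = y.
Proof.
move=> eq_xy; apply/funext => k; apply: le_anti.
by rewrite !counting_fun_comparison // => l; rewrite eq_xy.
Qed.

(* The [L] copies of [atan (x k)] and the terms of higher rank each exceed
   [- pi / 2] by at most [pi / (L + N)]; there are fewer than [L + N] of them,
   so together they cost less than one unit of the counting function. *)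
Lemma counting_fun_le_rank x (v : 'I_N -> nat) k :
  injective v -> (forall l, 0 < v l)%N ->
  atan (x k) <= pi / (L + N)%:R - pi / 2 ->
  (forall l, (v k < v l)%N -> atan (x k - x l) <= pi / (L + N)%:R - pi / 2) ->
  counting_fun x (x k) <= (v k)%:R - (L + N - 1)%:R / 2.
Proof.
move=> v_inj v_gt0 far_left far_left_of_higher.
set d : R := pi / (L + N)%:R in far_left far_left_of_higher *; have pi_gt0 := pi_gt0 R.
have d_ge0 : 0 <= d by rewrite /d divr_ge0 // ltW.
have d_LN : d * (L + N)%:R = pi by rewrite /d divfK // pnatr_eq0 addn_eq0 negb_and -lt0n L_gt0.
pose lower : pred 'I_N := fun l => (l != k) && (v l < v k)%N.
pose higher : pred 'I_N := fun l => (l != k) && ~~ (v l < v k)%N.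
have card_lower : (#|lower| <= v k - 1)%N.
  by apply: (@inj_card_le_range _ v lower 1 (v k) v_inj) => l /andP[_ ->]; rewrite v_gt0.
have card_split : (#|lower| + #|higher| = N.-1)%N.
  have := cardID (fun l => (v l < v k)%N) (predC1 k); rewrite cardC1 card_ord => <-.
  by congr (_ + _); apply: eq_card => j; rewrite !inE // andbC.
have lower_sum : \sum_(l < N | lower l) atan (x k - x l) <= #|lower|%:R * (pi / 2).
  apply: le_trans (ler_sum _ (fun l _ => ltW (atan_ltpi2 _))) _.
  by rewrite sumr_const mulr_natl.
have higher_sum : \sum_(l < N | higher l) atan (x k - x l) <= #|higher|%:R * (d - pi / 2).
  apply: le_trans (ler_sum _ (_ : forall l, higher l -> _ <= d - pi / 2)) _.
    move=> l /andP[l_neq_k]; rewrite -leqNgt leq_eqVlt => /orP[/eqP/v_inj lk|].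
      by rewrite lk eqxx in l_neq_k.
    exact: far_left_of_higher.
  by rewrite sumr_const mulr_natl.
rewrite /counting_fun (bigD1 k) //= subrr atan0 add0r (bigID (fun l => (v l < v k)%N)) /=.
rewrite -/(\sum_(l < N | lower l) _) -/(\sum_(l < N | higher l) _) ler_pdivrMr //.
have N_gt0 : (0 < N)%N := leq_ltn_trans (leq0n k) (ltn_ord k).
have card_lowerR : #|lower|%:R + 1 <= (v k)%:R :> R.
  by rewrite natr1 ler_nat; move: card_lower (v_gt0 k); lia.
have card_splitR : #|lower|%:R + #|higher|%:R + 1 = N%:R :> R.
  by rewrite -natrD natr1 card_split prednK.
have LN1 : (L + N - 1)%:R = L%:R + N%:R - 1 :> R by rewrite natrB ?natrD // addn_gt0 L_gt0.
have L_term : L%:R * atan (x k) <= L%:R * (d - pi / 2) by rewrite ler_wpM2l.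
rewrite LN1 -d_LN natrD; rewrite natrD in d_LN.
have := ler0n R #|lower|; have := ler0n R #|higher|; nra.
Qed.

Lemma counting_fun_solvable (v : 'I_N -> nat) :
  injective v -> (forall l, 0 < v l < L + N - 1)%N ->
  exists x, forall k, counting_fun x (x k) = (v k)%:R - (L + N - 1)%:R / 2.
Proof.
move=> v_inj v_range; have pi_gt0 := pi_gt0 R.
have [N0|N_gt0] := posnP N.
  by exists (fun=> 0) => k; move: (ltn_ord k); rewrite {2}N0.
set h : R := (L + N - 1)%:R / 2; set d : R := pi / (L + N)%:R.
have LN_gt1 : 1 < (L + N)%:R :> R by rewrite ltr1n; lia.
have d_gt0 : 0 < d by rewrite divr_gt0 // (lt_trans ltr01).
have d_lt_pi : d < pi by rewrite ltr_pdivrMr ?(lt_trans ltr01) // ltr_pMr.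
have [D D_ge0 far_left] : exists2 D, 0 <= D & forall t, t <= - D -> atan t <= d - pi / 2.
  exists `|tan (pi / 2 - d)| => // t le_tD; rewrite -opprB; apply: atan_le_opp le_tD.
  by rewrite in_itv /=; apply/andP; split; lra.
pose spread (w : 'I_N -> nat) l := D * ((w l)%:R - (L + N)%:R).
have spread_le0 w l : (w l < L + N - 1)%N -> spread w l <= 0.
  by move=> lt_w; rewrite /spread mulr_ge0_le0 // subr_le0 ler_nat; lia.
have spread_sub w : injective w -> (forall l, 0 < w l < L + N - 1)%N ->
    forall k, counting_fun (spread w) (spread w k) <= (w k)%:R - h.
  move=> w_inj w_range k; apply: counting_fun_le_rank => //.
  - by move=> l; case/andP: (w_range l).
  - apply: far_left; have : (w k)%:R + 1 <= (L + N)%:R :> R.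
      by rewrite natr1 ler_nat; case/andP: (w_range k) => _; lia.
    by rewrite /spread; nra.
  - move=> l lt_kl; apply: far_left; have : (w k)%:R + 1 <= (w l)%:R :> R.
      by rewrite natr1 ler_nat.
    by rewrite /spread; nra.
(* The supersolution is the mirror image of the subsolution for the reversed ranks. *)
pose v' l := (L + N - 1 - v l)%N.
have v'_inj : injective v'.
  by move=> j l; rewrite /v' => e; apply: v_inj; move: e (v_range j) (v_range l); lia.
have v'_range l : (0 < v' l < L + N - 1)%N by rewrite /v'; move: (v_range l); lia.
apply: (@monotone_system_solvable R _ (fun x _ => counting_fun x) (fun k => (v k)%:R - h)
          (spread v) (fun l => - spread v' l)).
- by move=> x _; exact: counting_fun_lt.
- by move=> x y _ t; exact: counting_fun_antitone.
- by move=> x _; exact: continuous_counting_fun.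
- move=> l; have /andP[_ ?] := v_range l; have /andP[_ ?] := v'_range l.
  by rewrite (le_trans (spread_le0 v l _)) ?oppr_ge0 ?spread_le0.
- exact: spread_sub v v_inj v_range.
- move=> k /=; rewrite counting_funN lerNr.
  have -> : - ((v k)%:R - h) = (v' k)%:R - h.
    have /andP[_ /ltnW v_le] := v_range k.
    by rewrite /h /v' (natrB _ v_le); field.
  exact: (spread_sub v' v'_inj v'_range k).
Qed.

Lemma log_bethe_eqs_bethe_numbers lam I :
  injective lam -> log_bethe_eqs L lam I ->
  injective I /\ (forall k, - ((L + N - 1)%:R / 2) < I k /\ I k < (L + N - 1)%:R / 2).
Proof.
move=> lam_inj /log_bethe_eqsE eqs; split.
  move=> j k; rewrite -!eqs => /(inc_inj (le_mono (counting_fun_lt lam))).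
  exact: lam_inj.
by move=> k; have := counting_fun_bound lam k; rewrite eqs ltr_norml => /andP[].
Qed.

Lemma log_bethe_eqs_exists_unique I :
  ~~ odd L -> (forall k, bethe_number N (I k)) -> injective I ->
  (forall k, - ((L + N - 1)%:R / 2) < I k /\ I k < (L + N - 1)%:R / 2) ->
  exists! lam, injective lam /\ log_bethe_eqs L lam I.
Proof.
move=> L_even I_bethe I_inj I_range.
have /choice[v vP] k : exists v : nat,
    I k = v%:R - (L + N - 1)%:R / 2 /\ (0 < v < L + N - 1)%N.
  have N_gt0 : (0 < N)%N := leq_ltn_trans (leq0n k) (ltn_ord k).
  have [|v] := bethe_number_shift (I k) L_even N_gt0 (I_bethe k); first exact/andP/I_range.
  by exists v.
have I_v k : I k = (v k)%:R - (L + N - 1)%:R / 2 by case: (vP k).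
have v_inj : injective v by move=> j k e; apply: I_inj; rewrite !I_v e.
have [x x_sol] := counting_fun_solvable v v_inj (fun k => (vP k).2).
exists x; split.
  split; last by apply/log_bethe_eqsE => k; rewrite x_sol I_v.
  by move=> j k e; apply: I_inj; rewrite !I_v -!x_sol e.
move=> y [_ /log_bethe_eqsE y_sol]; apply: counting_fun_solution_unique => k.
by rewrite x_sol y_sol I_v.
Qed.

End CountingFunction.

Theorem proposition1 (R : realType) (L N : nat) (hL : (0 < L)%N) (hLe : ~~ odd L)
    (hN : (0 < N)%N) :
  (* (i) every solution with pairwise distinct roots is real *)
  (forall lam : 'I_N -> R[i], injective lam -> bethe_eqs L lam ->
     forall k, complex.Im (lam k) = 0)
  /\
  (* (ii) real solutions with distinct roots have distinct Bethe numbers in range *)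
  (forall (lam : 'I_N -> R) (I : 'I_N -> R),
     injective lam -> (forall k, bethe_number N (I k)) -> log_bethe_eqs L lam I ->
     injective I /\
     (forall k, - ((L + N - 1)%:R / 2) < I k /\ I k < (L + N - 1)%:R / 2))
  /\
  (* (iii) each admissible choice of distinct Bethe numbers gives exactly one solution *)
  (forall I : 'I_N -> R,
     (forall k, bethe_number N (I k)) -> injective I ->
     (forall k, - ((L + N - 1)%:R / 2) < I k /\ I k < (L + N - 1)%:R / 2) ->
     exists! lam : 'I_N -> R, injective lam /\ log_bethe_eqs L lam I).
Proof.
split; first by move=> lam _; exact: bethe_eqs_real.
split; first by move=> lam I lam_inj _; exact: log_bethe_eqs_bethe_numbers.
by move=> I; exact: log_bethe_eqs_exists_unique.
Qed.
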